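(* Let $f=\sum_{P\in\mathcal{M}} a_P x^P$ be a nonzero real polynomial in $x_1,\ldots,x_n$, where $\mathcal{M}\subseteq\mathbb{N}^n$ is the set of exponent vectors of monomials occurring in $f$ (so $a_P\neq 0$ for $P\in\mathcal{M}$). Then for every integer $k\ge 0$, $$\dim \partial^{=k} f \geq \frac{\sum_{P \in \mathcal{M}} \binom{\sup(P)}{k}a_P^2}{|\mathcal{M}|\sum_{P \in \mathcal{M}} a_P^2}.$$
   Context: For $\alpha\in\mathbb{N}^n$, $x^\alpha = x_1^{\alpha_1}\cdots x_n^{\alpha_n}/(\alpha_1!\cdots\alpha_n!)$ (scaled monomial basis); the coefficients $a_P$ are with respect to this basis. $\sup(P)$ is the number of indices $i$ with $P_i>0$. For $\beta\in\mathbb{N}^n$, $\partial_\beta f$ is the partial derivative differentiating $\beta_i$ times with respect to $x_i$; $\partial^{=k} f$ is the real linear span of all $\partial_\beta f$ with $\beta_1+\cdots+\beta_n=k$. *)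

From HB Require Import structures.
From mathcomp Require Import all_boot all_order all_algebra.
From mathcomp Require Import mpoly.
Set Implicit Arguments. Unset Strict Implicit. Unset Printing Implicit Defensive.
Import Order.TTheory GRing.Theory Num.Theory.
Local Open Scope ring_scope.

Section Defs.
Variables (R : realFieldType) (n : nat).

Definition mnm_fact (m : 'X_{1..n}) : nat := (\prod_(i < n) (m i)`!)%N.

(* coefficient a_P of f w.r.t. the scaled basis x^P / P! : a_P = P! * [x^P] f *)
Definition scoef (f : {mpoly R[n]}) (m : 'X_{1..n}) : R := (mnm_fact m)%:R * f@_m.

Definition mnm_sup (m : 'X_{1..n}) : nat := #|[set i : 'I_n | (0 < m i)%N]|.

Definition in_dspan (k : nat) (f q : {mpoly R[n]}) : Prop :=
  exists (s : seq 'X_{1..n}) (c : 'X_{1..n} -> R),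
    all (fun b => mdeg b == k) s /\ q = \sum_(b <- s) c b *: f^`M[b].

Definition lin_indep (d : nat) (v : 'I_d -> {mpoly R[n]}) : Prop :=
  forall c : 'I_d -> R, \sum_(i < d) c i *: v i = 0 -> forall i, c i = 0.

Definition is_dim_dspan (k : nat) (f : {mpoly R[n]}) (d : nat) : Prop :=
  (exists v : 'I_d -> {mpoly R[n]}, (forall i, in_dspan k f (v i)) /\ lin_indep v) /\
  (forall v : 'I_d.+1 -> {mpoly R[n]}, (forall i, in_dspan k f (v i)) -> ~ lin_indep v).

End Defs.

From HB Require Import structures.
From mathcomp Require Import all_boot all_order all_algebra.
From mathcomp Require Import mpoly.
Set Implicit Arguments. Unset Strict Implicit. Unset Printing Implicit Defensive.
Import Order.TTheory GRing.Theory Num.Theory.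
Local Open Scope ring_scope.

(* The bound holds term by term: binom(sup P, k) <= |M| * dim d^{=k} f for
   every P in M, and the left-hand side is a weighted mean of these binomials
   divided by |M|.  For a k-subset B of the support of P, the derivative
   d_B f of f along the indicator monomial of B is nonzero, since its
   coefficient at P - B is a nonzero multiple of a_P.  Its leading monomial L
   satisfies L + B in M, so B is determined by the pair (L, L + B).  Nonzero
   polynomials with distinct leading monomials are linearly independent,
   hence at most dim d^{=k} f distinct leading monomials L occur. *)

Lemma mcoeff_mderivm_eq0 (R : numDomainType) n (b m : 'X_{1..n}) (p : {mpoly R[n]}) :
  (p^`M[b]@_m == 0) = (p@_(m + b) == 0).
Proof.
move: {2}(mdeg b) (erefl (mdeg b)) => d deg_b.
elim: d b m p deg_b => [|d IH] b m p deg_b.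
  by move/eqP: deg_b; rewrite mdeg_eq0 => /eqP->; rewrite mderivm0m addm0.
have [i b_i] : exists i, (0 < b i)%N.
  case: (pickP (fun i => 0 < b i)%N) => [i|b0]; first by exists i.
  suff b_eq0 : b = 0%MM by rewrite b_eq0 mdeg0 in deg_b.
  by apply/mnmP => i; rewrite mnm0E; move: (b0 i) => /=; case: (b i).
have U_le_b : (U_(i) <= b)%MM.
  by apply/mnm_lepP => j; rewrite mnm1E; case: eqP => [<-|].
have b_split : b = (U_(i) + (b - U_(i)))%MM by rewrite addmC submK.
have deg_rest : mdeg (b - U_(i)) = d.
  by move: deg_b; rewrite {1}b_split mdegD mdeg1 add1n => -[].
rewrite b_split mderivmDm mderivmU1m IH // mcoeff_deriv mulrn_eq0 /=.
by rewrite -addmA [(_ + U_(i))%MM]addmC -b_split.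
Qed.

Lemma mderivm_neq0 (R : numDomainType) n (b P : 'X_{1..n}) (p : {mpoly R[n]}) :
  (b <= P)%MM -> P \in msupp p -> p^`M[b] != 0.
Proof.
move=> le_bP P_supp; apply: contraTneq P_supp => der_eq0.
by rewrite -mcoeff_eq0 -(submK le_bP) -mcoeff_mderivm_eq0 der_eq0 mcoeff0.
Qed.

Lemma mlead_mderivm_supp (R : numDomainType) n (b : 'X_{1..n}) (p : {mpoly R[n]}) :
  p^`M[b] != 0 -> (mlead p^`M[b] + b)%MM \in msupp p.
Proof.
by move/mlead_supp; rewrite !mcoeff_msupp mcoeff_mderivm_eq0.
Qed.

Lemma lin_indep_mlead (R : realFieldType) n d (v : 'I_d -> {mpoly R[n]}) :
  (forall i, v i != 0) -> injective (fun i => mlead (v i)) -> lin_indep v.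
Proof.
move=> v_neq0 mlead_inj c sum_eq0 i; apply/eqP/negPn/negP => c_i.
have [j c_j j_max] := @arg_maxP _ _ _ i [pred j | c j != 0] (fun j => mlead (v j)) c_i.
have : (\sum_(l < d) c l *: v l)@_(mlead (v j)) = 0 by rewrite sum_eq0 mcoeff0.
rewrite raddf_sum (bigD1 j) //= big1 ?addr0.
  rewrite mcoeffZ => /eqP.
  by rewrite mulf_eq0 mleadc_eq0 (negbTE (v_neq0 j)) orbF (negbTE c_j).
move=> l l_neq_j; rewrite mcoeffZ.
have [->|c_l] := eqVneq (c l) 0; first by rewrite mul0r.
have le_lj : (mlead (v l) <= mlead (v j))%O := j_max l c_l.
rewrite mcoeff_gt_mlead ?mulr0 // lt_neqAle le_lj andbT.
by apply: contra l_neq_j => /eqP/mlead_inj ->.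
Qed.

Lemma exists_sub_map_undup (T U : eqType) (f : T -> U) (s : seq T) :
  exists2 t, {subset t <= s} & map f t = undup (map f s).
Proof.
elim: s => [|x s [t sub_ts f_t]]; first by exists [::].
rewrite /=; case: ifP => _.
  by exists t => // y /sub_ts; rewrite inE orbC => ->.
exists (x :: t); last by rewrite /= f_t.
by move=> y; rewrite !inE => /orP[->|/sub_ts ->]; rewrite ?orbT.
Qed.

Lemma size_undup_mlead_dspan (R : realFieldType) n k (f : {mpoly R[n]}) d
    (s : seq {mpoly R[n]}) :
  is_dim_dspan k f d -> (forall q, q \in s -> in_dspan k f q /\ q != 0) ->
  (size (undup [seq mlead q | q <- s]) <= d)%N.
Proof.
move=> [_ no_indep] s_ok; have [t sub_ts mlead_t] := exists_sub_map_undup (fun q => mlead q) s.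
rewrite -mlead_t size_map leqNgt; apply/negP => lt_dt.
have t_i (i : 'I_d.+1) : (i < size t)%N by rewrite (leq_trans (ltn_ord i)).
have t_ok (i : 'I_d.+1) := s_ok _ (sub_ts _ (mem_nth 0 (t_i i))).
apply: (no_indep (fun i => nth 0 t i)) => [i|]; first by case: (t_ok i).
apply: lin_indep_mlead => [i|i j]; first by case: (t_ok i).
rewrite /= -!(nth_map 0 0%MM) // mlead_t.
by move/eqP; rewrite nth_uniq ?undup_uniq -?mlead_t ?size_map // => /eqP/val_inj.
Qed.

Definition mnm_of_set n (B : {set 'I_n}) : 'X_{1..n} := \big[+%MM/0%MM]_(i in B) U_(i)%MM.

Lemma mnm_of_setE n (B : {set 'I_n}) (j : 'I_n) : mnm_of_set B j = (j \in B).
Proof.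
rewrite /mnm_of_set mnm_sumE big_mkcond (bigD1 j) //= big1 => [|i ij].
  by rewrite mnm1E eqxx addn0; case: (j \in B).
by rewrite mnm1E (negbTE ij); case: (i \in B).
Qed.

Lemma mdeg_mnm_of_set n (B : {set 'I_n}) : mdeg (mnm_of_set B) = #|B|.
Proof. by rewrite mdeg_sum (eq_bigr (fun _ => 1%N)) ?sum1_card // => i _; rewrite mdeg1. Qed.

Lemma mnm_of_set_inj n : injective (@mnm_of_set n).
Proof.
move=> B1 B2 eqB; apply/setP => j; have := congr1 (fun m : 'X_{1..n} => m j) eqB.
by rewrite /= !mnm_of_setE; case: (j \in B1); case: (j \in B2).
Qed.

Lemma mnm_of_set_le n (B : {set 'I_n}) (m : 'X_{1..n}) :
  B \subset [set i | (0 < m i)%N] -> (mnm_of_set B <= m)%MM.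
Proof.
move/subsetP => sub_B; apply/mnm_lepP => j; rewrite mnm_of_setE.
by case: (boolP (j \in B)) => // /sub_B; rewrite inE.
Qed.

Lemma bin_mnm_sup_le (R : realFieldType) n (f : {mpoly R[n]}) k d P :
  P \in msupp f -> is_dim_dspan k f d -> ('C(mnm_sup P, k) <= size (msupp f) * d)%N.
Proof.
move=> P_supp dim_d.
pose S := [set B : {set 'I_n} | B \subset [set i | (0 < P i)%N] & #|B| == k].
have -> : 'C(mnm_sup P, k) = #|S| by rewrite cards_draws.
pose g B := f^`M[mnm_of_set B].
have g_neq0 B : B \in S -> g B != 0.
  by rewrite inE => /andP[sub_B _]; apply: mderivm_neq0 P_supp; apply: mnm_of_set_le.
have g_dspan B : B \in S -> in_dspan k f (g B).
  rewrite inE => /andP[_ /eqP card_B]; exists [:: mnm_of_set B], (fun _ => 1).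
  by split; rewrite ?big_seq1 ?scale1r //= mdeg_mnm_of_set card_B eqxx.
set Ls := undup [seq mlead q | q <- [seq g B | B <- enum S]].
have size_Ls : (size Ls <= d)%N.
  apply: size_undup_mlead_dspan dim_d _ => q /mapP[B]; rewrite mem_enum => B_S ->.
  by split; [apply: g_dspan | apply: g_neq0].
have card_S : (#|S| <= size Ls * size (msupp f))%N.
  pose pair_of B := (mlead (g B), (mlead (g B) + mnm_of_set B)%MM).
  rewrite cardE -(size_map pair_of) -(size_allpairs pair); apply: uniq_leq_size.
    rewrite map_inj_in_uniq ?enum_uniq // => B1 B2 _ _ eq_pair.
    have /= eq_lead := congr1 fst eq_pair; have /= := congr1 snd eq_pair.
    by rewrite eq_lead => /addmI /mnm_of_set_inj.
  move=> x /mapP[B]; rewrite mem_enum => B_S ->; apply: allpairs_f.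
    by rewrite mem_undup; apply/map_f/map_f; rewrite mem_enum.
  exact/mlead_mderivm_supp/g_neq0.
by rewrite mulnC (leq_trans card_S) // leq_mul2r size_Ls orbT.
Qed.

Lemma weighted_mean_le (R : realFieldType) (I : eqType) (s : seq I) (a w : I -> R) (C : R) :
  0 <= C -> (forall i, i \in s -> 0 <= w i) -> (forall i, i \in s -> a i <= C) ->
  (\sum_(i <- s) a i * w i) / (\sum_(i <- s) w i) <= C.
Proof.
move=> C_ge0 w_ge0 a_le.
have sum_ge0 : 0 <= \sum_(i <- s) w i by rewrite big_seq sumr_ge0.
have [->|sum_neq0] := eqVneq (\sum_(i <- s) w i) 0; first by rewrite invr0 mulr0.
rewrite ler_pdivrMr ?lt_def ?sum_neq0 // mulr_sumr !big_seq.
by apply: ler_sum => i s_i; apply: ler_wpM2r; [apply: w_ge0 | apply: a_le].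
Qed.

Theorem theorem3 (R : realFieldType) (n : nat) (f : {mpoly R[n]}) (k d : nat) :
  f != 0 -> is_dim_dspan k f d ->
  (\sum_(P <- msupp f) 'C(mnm_sup P, k)%:R * scoef f P ^+ 2)
    / ((size (msupp f))%:R * \sum_(P <- msupp f) scoef f P ^+ 2)
  <= (d%:R : R).
Proof.
move=> f_neq0 dim_d.
have supp_gt0 : (0 < size (msupp f))%N by rewrite lt0n size_eq0 msupp_eq0.
rewrite invfM mulrCA ler_pdivrMl ?ltr0n // -natrM.
apply: weighted_mean_le => [|P _|P P_supp]; first exact: ler0n.
  exact: sqr_ge0.
by rewrite ler_nat; apply: bin_mnm_sup_le.
Qed.
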